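(* Let $R$ be a right or left Noetherian ring that is finitely presented (as a ring, or as an algebra over a fixed commutative base). Then every homomorphic image of $R$ is also finitely presented (in the same sense).
   Context: A ring (resp. algebra) is finitely presented if it is isomorphic to a free ring (resp. free algebra) on finitely many generators modulo a two-sided ideal generated by finitely many elements. *)

From HB Require Import structures.
From mathcomp Require Import all_boot all_order all_algebra.
From mathcomp.multinomials Require Import monalg.
Set Implicit Arguments. Unset Strict Implicit. Unset Printing Implicit Defensive.
Import GRing.Theory.
Local Open Scope ring_scope.

(* The free (non-commutative) k-algebra on n generators: the monoid algebra
   of the free monoid {fmonom 'I_n} (words in the letters 0..n-1) over k. *)
Definition free_alg (k : comNzRingType) (n : nat) := {malg k[{fmonom 'I_n}]}.
Definition free_ring (n : nat) := free_alg int n.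

Definition in_tsideal (A : pzRingType) (s : seq A) (x : A) : Prop :=
  exists t : seq (A * 'I_(size s) * A),
    x = \sum_(u <- t) u.1.1 * s`_(u.1.2) * u.2.

(* A ring A is finitely presented: A is isomorphic to a free ring on finitely
   many generators modulo a two-sided ideal generated by finitely many
   elements, i.e. there is a surjective ring morphism from a free ring of
   finite rank whose kernel is a finitely generated two-sided ideal. *)
Definition fp_ring (A : pzRingType) : Prop :=
  exists (n : nat) (f : {rmorphism free_ring n -> A}) (rels : seq (free_ring n)),
    (forall a : A, exists p, f p = a) /\
    (forall p, f p = 0 <-> in_tsideal rels p).

(* A k-algebra is a ring A together with a ring morphism phi : k -> A with
   central image.  (A, phi) is finitely presented as a k-algebra when there is
   a surjective k-algebra morphism (a ring morphism compatible with the
   structure maps) from a free k-algebra of finite rank whose kernel is a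
   finitely generated two-sided ideal. *)
Definition fp_alg (k : comNzRingType) (A : pzRingType) (phi : k -> A) : Prop :=
  exists (n : nat) (f : {rmorphism free_alg k n -> A}) (rels : seq (free_alg k n)),
    (forall c : k, f (c%:MP) = phi c) /\
    (forall a : A, exists p, f p = a) /\
    (forall p, f p = 0 <-> in_tsideal rels p).

Definition right_ideal (R : pzRingType) (I : R -> Prop) : Prop :=
  [/\ I 0, (forall x y, I x -> I y -> I (x + y)) & (forall x r, I x -> I (x * r))].
Definition left_ideal (R : pzRingType) (I : R -> Prop) : Prop :=
  [/\ I 0, (forall x y, I x -> I y -> I (x + y)) & (forall x r, I x -> I (r * x))].

Definition right_noetherian (R : pzRingType) : Prop :=
  forall I : R -> Prop, right_ideal I ->
    exists s : seq R, forall x, I x <->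
      exists c : 'I_(size s) -> R, x = \sum_(i < size s) s`_i * c i.
Definition left_noetherian (R : pzRingType) : Prop :=
  forall I : R -> Prop, left_ideal I ->
    exists s : seq R, forall x, I x <->
      exists c : 'I_(size s) -> R, x = \sum_(i < size s) c i * s`_i.

From HB Require Import structures.
From mathcomp Require Import all_boot all_order all_algebra.
From mathcomp.multinomials Require Import monalg.
Set Implicit Arguments. Unset Strict Implicit.
Local Open Scope ring_scope.
Import GRing.Theory.

(* Let f : F ->> R present R with relations rels and let g : R ->> S.  The
   kernel of g is a two-sided ideal, hence in particular a one-sided ideal, so
   the Noetherian hypothesis makes it generated (already as a one-sided ideal,
   a fortiori as a two-sided one) by a finite family s.  Lifting s along f to
   ps, the kernel of g \o f is generated by rels ++ ps: if g (f p) = 0 then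
   f p = f x for some x in the ideal of ps, and p - x lies in ker f. *)

Section TwoSidedIdeal.
Variable A : pzRingType.
Implicit Types (s : seq A) (x y : A).

Lemma in_tsideal0 s : in_tsideal s 0.
Proof. by exists [::]; rewrite big_nil. Qed.

Lemma in_tsidealD s x y :
  in_tsideal s x -> in_tsideal s y -> in_tsideal s (x + y).
Proof. by move=> [t1 ->] [t2 ->]; exists (t1 ++ t2); rewrite big_cat. Qed.

Lemma in_tsidealM {s y} a b : in_tsideal s y -> in_tsideal s (a * y * b).
Proof.
move=> [t ->]; exists [seq (a * u.1.1, u.1.2, u.2 * b) | u <- t].
rewrite big_map mulr_sumr mulr_suml; apply: eq_bigr => u _ /=.
by rewrite !mulrA.
Qed.

Lemma in_tsideal_mem s y : y \in s -> in_tsideal s y.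
Proof.
rewrite -index_mem => ys; exists [:: (1, Ordinal ys, 1)].
by rewrite big_seq1 /= mulr1 mul1r nth_index // -index_mem.
Qed.

Lemma in_tsideal_sub s s' x :
  {in s, forall y, in_tsideal s' y} -> in_tsideal s x -> in_tsideal s' x.
Proof.
move=> ss' [t ->]; elim: t => [|u t IHt]; first by rewrite big_nil; apply: in_tsideal0.
by rewrite big_cons; apply: in_tsidealD => //; apply/in_tsidealM/ss'/mem_nth.
Qed.

Lemma in_tsideal_catl s s' x : in_tsideal s x -> in_tsideal (s ++ s') x.
Proof. by apply: in_tsideal_sub => y ys; apply: in_tsideal_mem; rewrite mem_cat ys. Qed.

Lemma in_tsideal_catr s s' x : in_tsideal s' x -> in_tsideal (s ++ s') x.
Proof.
by apply: in_tsideal_sub => y ys'; apply: in_tsideal_mem; rewrite mem_cat ys' orbT.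
Qed.

Lemma in_tsideal_rspan s (c : 'I_(size s) -> A) :
  in_tsideal s (\sum_(i < size s) s`_i * c i).
Proof.
exists [seq (1, i, c i) | i <- enum 'I_(size s)].
by rewrite big_map big_enum; apply: eq_bigr => i _ /=; rewrite mul1r.
Qed.

Lemma in_tsideal_lspan s (c : 'I_(size s) -> A) :
  in_tsideal s (\sum_(i < size s) c i * s`_i).
Proof.
exists [seq (c i, i, 1) | i <- enum 'I_(size s)].
by rewrite big_map big_enum; apply: eq_bigr => i _ /=; rewrite mulr1.
Qed.

Lemma rspan_mem s y : y \in s ->
  exists c : 'I_(size s) -> A, y = \sum_(i < size s) s`_i * c i.
Proof.
rewrite -index_mem => ys; exists (fun i => (val i == index y s)%:R).
rewrite (bigD1 (Ordinal ys)) //= eqxx mulr1 nth_index -?index_mem //.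
rewrite big1 ?addr0 // => i; rewrite -val_eqE /= => /negbTE->.
by rewrite mulr0.
Qed.

Lemma lspan_mem s y : y \in s ->
  exists c : 'I_(size s) -> A, y = \sum_(i < size s) c i * s`_i.
Proof.
rewrite -index_mem => ys; exists (fun i => (val i == index y s)%:R).
rewrite (bigD1 (Ordinal ys)) //= eqxx mul1r nth_index -?index_mem //.
rewrite big1 ?addr0 // => i; rewrite -val_eqE /= => /negbTE->.
by rewrite mul0r.
Qed.

End TwoSidedIdeal.

Section Kernel.
Variables (A B : pzRingType) (g : {rmorphism A -> B}).

Lemma rmorph_ker_right_ideal : right_ideal (fun x => g x = 0).
Proof.
split; first exact: rmorph0.
  by move=> x y gx gy; rewrite rmorphD gx gy addr0.
by move=> x r gx; rewrite rmorphM gx mul0r.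
Qed.

Lemma rmorph_ker_left_ideal : left_ideal (fun x => g x = 0).
Proof.
split; first exact: rmorph0.
  by move=> x y gx gy; rewrite rmorphD gx gy addr0.
by move=> x r gx; rewrite rmorphM gx mulr0.
Qed.

Lemma rmorph_tsideal_eq0 (s : seq A) x :
  {in s, forall y, g y = 0} -> in_tsideal s x -> g x = 0.
Proof.
move=> gs [t ->]; rewrite rmorph_sum big1 // => u _.
by rewrite !rmorphM (gs _ (mem_nth 0 (ltn_ord u.1.2))) mulr0 mul0r.
Qed.

Lemma ker_tsideal_rspan (s : seq A) :
  (forall x, g x = 0 <-> exists c, x = \sum_(i < size s) s`_i * c i) ->
  forall x, g x = 0 <-> in_tsideal s x.
Proof.
move=> kerg x; split; first by move/kerg=> [c ->]; exact: in_tsideal_rspan.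
by apply: rmorph_tsideal_eq0 => y /rspan_mem /kerg.
Qed.

Lemma ker_tsideal_lspan (s : seq A) :
  (forall x, g x = 0 <-> exists c, x = \sum_(i < size s) c i * s`_i) ->
  forall x, g x = 0 <-> in_tsideal s x.
Proof.
move=> kerg x; split; first by move/kerg=> [c ->]; exact: in_tsideal_lspan.
by apply: rmorph_tsideal_eq0 => y /lspan_mem /kerg.
Qed.

Lemma noetherian_ker_tsideal :
  right_noetherian A \/ left_noetherian A ->
  exists s, forall x, g x = 0 <-> in_tsideal s x.
Proof.
case=> [noethA | noethA].
  have [s kerg] := noethA _ rmorph_ker_right_ideal.
  by exists s; exact: ker_tsideal_rspan.
have [s kerg] := noethA _ rmorph_ker_left_ideal.
by exists s; exact: ker_tsideal_lspan.
Qed.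

End Kernel.

Lemma surj_lift_seq (T U : Type) (f : T -> U) (s : seq U) :
  (forall u, exists t, f t = u) -> exists ts, map f ts = s.
Proof.
move=> fsurj; elim: s => [|u s [ts fts]]; first by exists [::].
by have [t ft] := fsurj u; exists (t :: ts); rewrite /= ft fts.
Qed.

Lemma surj_comp (T U V : Type) (f : T -> U) (g : U -> V) :
  (forall u, exists t, f t = u) -> (forall v, exists u, g u = v) ->
  forall v, exists t, g (f t) = v.
Proof.
by move=> fsurj gsurj v; have [u <-] := gsurj v; have [t <-] := fsurj u; exists t.
Qed.

Section Composition.
Variables (A B C : pzRingType) (f : {rmorphism A -> B}) (g : {rmorphism B -> C}).
Hypothesis fsurj : forall y, exists x, f x = y.

Lemma in_tsideal_lift (s : seq A) y :
  in_tsideal (map f s) y -> exists2 x, f x = y & in_tsideal s x.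
Proof.
move=> [t ->]; elim: t => [|u t [x fx sx]].
  by exists 0; [rewrite big_nil rmorph0 | apply: in_tsideal0].
have [[a fa] [b fb]] := (fsurj u.1.1, fsurj u.2).
have ui : (u.1.2 < size s)%N by rewrite -(size_map f) ltn_ord.
exists (a * s`_(u.1.2) * b + x).
  by rewrite big_cons rmorphD !rmorphM fa fb fx (nth_map 0).
by apply: in_tsidealD => //; apply/in_tsidealM/in_tsideal_mem/mem_nth.
Qed.

Lemma ker_comp_tsideal (rels ps : seq A) :
  (forall p, f p = 0 <-> in_tsideal rels p) ->
  (forall y, g y = 0 <-> in_tsideal (map f ps) y) ->
  forall p, g (f p) = 0 <-> in_tsideal (rels ++ ps) p.
Proof.
move=> kerf kerg p; split.
  move/kerg/in_tsideal_lift=> [x fx psx].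
  have kerf_px : f (p - x) = 0 by rewrite rmorphB fx subrr.
  rewrite -(subrK x p); apply: in_tsidealD; last exact: in_tsideal_catr.
  by apply/in_tsideal_catl/kerf.
move=> relsps_p; change ((g \o f) p = 0); apply: rmorph_tsideal_eq0 relsps_p => y.
rewrite mem_cat => /orP[].
  by move=> /in_tsideal_mem/kerf /= ->; rewrite rmorph0.
by move=> /(map_f f)/in_tsideal_mem/kerg.
Qed.

End Composition.

Lemma noetherian_quotient_relations (F R S : pzRingType)
  (f : {rmorphism F -> R}) (g : {rmorphism R -> S}) (rels : seq F) :
  right_noetherian R \/ left_noetherian R ->
  (forall r, exists p, f p = r) ->
  (forall p, f p = 0 <-> in_tsideal rels p) ->
  exists rels', forall p, g (f p) = 0 <-> in_tsideal rels' p.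
Proof.
move=> noethR fsurj kerf.
have [s kerg] := noetherian_ker_tsideal g noethR.
have [ps ps_s] := surj_lift_seq s fsurj; rewrite -ps_s in kerg.
by exists (rels ++ ps); apply: ker_comp_tsideal.
Qed.

Theorem lemma4p2 :
  (forall (R : pzRingType),
     right_noetherian R \/ left_noetherian R -> fp_ring R ->
     forall (S : pzRingType) (g : {rmorphism R -> S}),
       (forall s : S, exists r, g r = s) -> fp_ring S)
  /\
  (forall (k : comNzRingType) (R : pzRingType) (phi : {rmorphism k -> R}),
     (forall (c : k) (r : R), phi c * r = r * phi c) ->
     right_noetherian R \/ left_noetherian R -> fp_alg phi ->
     forall (S : pzRingType) (g : {rmorphism R -> S}),
       (forall s : S, exists r, g r = s) -> fp_alg (g \o phi)).
Proof.
split.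
  move=> R noethR [n [f [rels [fsurj kerf]]]] S g gsurj.
  have [rels' kergf] := noetherian_quotient_relations g noethR fsurj kerf.
  by exists n, (g \o f), rels'; split; [exact: (surj_comp fsurj gsurj) | exact: kergf].
move=> k R phi _ noethR [n [f [rels [fphi [fsurj kerf]]]]] S g gsurj.
have [rels' kergf] := noetherian_quotient_relations g noethR fsurj kerf.
exists n, (g \o f), rels'; split; first by move=> c /=; rewrite fphi.
by split; [exact: (surj_comp fsurj gsurj) | exact: kergf].
Qed.
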